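(* Let $Y$ be the set of functions $F(\gamma)=f(\gamma(s_1),\dots,\gamma(s_k))$, $\gamma\in C_0([0,1];\mathbb R^d)$, where $k\in\mathbb N$, $0<s_1<\dots<s_k=1$ with $s_1,\dots,s_k\in\{l/2^n:l\in\{1,\dots,2^n\}\}$ for some $n\in\mathbb N$, and $f\in C^\infty_p((\mathbb R^d)^k)$; and let $\tilde Y$ be the set of functions $F(\gamma)=f(\langle S_1,\gamma\rangle,\dots,\langle S_k,\gamma\rangle)$ with $k\in\mathbb N$, $f\in C^\infty_p(\mathbb R^k)$. Then $Y=\tilde Y$.
   Context: Fix $d\in\mathbb N$, $(e_j)$ standard basis of $\mathbb R^d$. $C_0([0,1];\mathbb R^d)$ is the space of continuous $\gamma:[0,1]\to\mathbb R^d$ with $\gamma(0)=0$. $C^\infty_p(\mathbb R^N)$ denotes the infinitely differentiable real functions all of whose partial derivatives are of at most polynomial growth. Haar functions: $H_1\equiv1$, and for $m\ge0$, $k=1,\dots,2^m$: $H_{2^m+k}=2^{m/2}$ on $[\frac{2k-2}{2^{m+1}},\frac{2k-1}{2^{m+1}})$, $-2^{m/2}$ on $[\frac{2k-1}{2^{m+1}},\frac{2k}{2^{m+1}})$, $0$ otherwise. $g_{d(r-1)+j}:=H_re_j$ ($r\in\mathbb N$, $1\le j\le d$), $S_i(s):=\int_0^sg_i(u)du$, and $\langle S_i,\gamma\rangle:=\int_0^1g_i(u)\cdot d\gamma_u$ (Stieltjes integral of the step function $g_i$). *)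

From HB Require Import structures.
From mathcomp Require Import all_boot all_order all_algebra.
From mathcomp Require Import all_classical all_reals all_analysis.
Set Implicit Arguments. Unset Strict Implicit. Unset Printing Implicit Defensive.
Import Order.TTheory GRing.Theory Num.Theory.
Import numFieldNormedType.Exports.
Local Open Scope ring_scope.
Local Open Scope classical_set_scope.

Section Defs.
Variable R : realType.

(* iterated partial derivatives of f : 'M[R]_(m,n) -> R; the list l gives the
   coordinate directions (i,j) (last element of l is differentiated first) *)
Fixpoint iter_partial (m n : nat) (l : seq ('I_m * 'I_n))
    (f : 'M[R]_(m, n) -> R) : 'M[R]_(m, n) -> R :=
  match l with
  | [::] => f
  | p :: l' => fun x => derive (iter_partial l' f) x (delta_mx p.1 p.2)
  end.

Definition Cinf_p (m n : nat) (f : 'M[R]_(m, n) -> R) : Prop :=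
  forall l : seq ('I_m * 'I_n),
    continuous (iter_partial l f) /\
    (forall (p : 'I_m * 'I_n) (x : 'M[R]_(m, n)),
        derivable (iter_partial l f) x (delta_mx p.1 p.2)) /\
    (exists (C : R) (N : nat), forall x : 'M[R]_(m, n),
        `|iter_partial l f x| <= C * (1 + `|x| ^+ N)).

Definition C0path (d : nat) (gamma : R -> 'rV[R]_d) : Prop :=
  {within `[0, 1]%classic, continuous gamma} /\ gamma 0 = 0.

(* Haar function H_{2^m+k} (m >= 0, 1 <= k <= 2^m) *)
Definition haar (m k : nat) (u : R) : R :=
  let a := (2 * k - 2)%:R / (2 ^ m.+1)%:R in
  let b := (2 * k - 1)%:R / (2 ^ m.+1)%:R in
  let c := (2 * k)%:R / (2 ^ m.+1)%:R in
  if (a <= u) && (u < b) then Num.sqrt ((2 ^ m)%:R)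
  else if (b <= u) && (u < c) then - Num.sqrt ((2 ^ m)%:R)
  else 0.

(* H_r for r >= 1: H_1 = 1, and r = 2^m + k with 1 <= k <= 2^m *)
Definition H (r : nat) (u : R) : R :=
  if r == 1%N then 1
  else haar (trunc_log 2 r.-1) (r - 2 ^ trunc_log 2 r.-1) u.

(* g_{d(r-1)+j} = H_r e_j  (i >= 1, r = (i-1)/d + 1, j = (i-1) mod d + 1;
   coordinates are 0-indexed in the row vector) *)
Definition gfun (d i : nat) (u : R) : 'rV[R]_d :=
  \row_(j < d) (if (j : nat) == (i.-1 %% d)%N then H ((i.-1 %/ d).+1) u else 0).

Definition RS_sum (d : nat) (g : R -> 'rV[R]_d) (gamma : R -> 'rV[R]_d)
    (n : nat) : R :=
  \sum_(l < 2 ^ n) \sum_(j < d)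
     g (l%:R / (2 ^ n)%:R) 0 j *
     (gamma (l.+1%:R / (2 ^ n)%:R) 0 j - gamma (l%:R / (2 ^ n)%:R) 0 j).

(* <S_i, gamma> = int_0^1 g_i(u) . d gamma_u  (Stieltjes integral) *)
Definition pairS (d i : nat) (gamma : R -> 'rV[R]_d) : R :=
  limn (RS_sum (gfun d i) gamma).

Definition inY (d : nat) (F : (R -> 'rV[R]_d) -> R) : Prop :=
  exists (k n : nat) (l : nat -> nat) (f : 'M[R]_(k, d) -> R),
    (0 < k)%N /\ (0 < n)%N /\
    (forall i, (i < k)%N -> (1 <= l i)%N /\ (l i <= 2 ^ n)%N) /\
    (forall i, (i.+1 < k)%N -> (l i < l i.+1)%N) /\
    l k.-1 = (2 ^ n)%N /\
    Cinf_p f /\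
    (forall gamma, C0path gamma ->
       F gamma = f (\matrix_(i < k, j < d)
                      gamma ((l i)%:R / (2 ^ n)%:R) 0 j)).

Definition inYt (d : nat) (F : (R -> 'rV[R]_d) -> R) : Prop :=
  exists (k : nat) (f : 'rV[R]_k -> R),
    [/\ (0 < k)%N, Cinf_p f &
        forall gamma, C0path gamma ->
          F gamma = f (\row_(i < k) @pairS d i.+1 gamma)].

End Defs.
Arguments pairS {R} d i gamma.

(* Both classes are the functions of finitely many linear functionals of the
   path, composed with a C^infty_p function, and C^infty_p is stable under
   linear changes of variables: continuous partial derivatives give every
   directional derivative, so each iterated partial derivative of [f \o L] is a
   linear combination of iterated partial derivatives of [f], composed with [L].
   It remains to see that the two families of functionals span each other on
   dyadic points. The Riemann-Stieltjes sums defining <H_r e_j, gamma> do not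
   change past any level 2^N >= r, as H_r is constant on the dyadic cells of that
   level, so <H_r e_j, gamma> is a combination of the increments of gamma at the
   points t / 2^N. Conversely, the indicator of [0, l / 2^N) lies in the span of
   H_1, ..., H_(2^N), whence gamma(l / 2^N) = gamma(l / 2^N) - gamma(0) is a
   combination of the <H_r e_j, gamma>. *)

From HB Require Import structures.
From mathcomp Require Import all_boot all_order all_algebra.
From mathcomp Require Import all_classical all_reals all_analysis.
From mathcomp Require Import zify ring lra.

Set Implicit Arguments. Unset Strict Implicit. Unset Printing Implicit Defensive.
Import Order.TTheory GRing.Theory Num.Theory.
Import numFieldNormedType.Exports.
Local Open Scope ring_scope.
Local Open Scope classical_set_scope.

Section DirectionalDerivatives.
Variable R : realType.

Lemma eq_line_derive (U V : normedModType R) (f : U -> R) (g : V -> R)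
    (a v : U) (b u : V) :
  (forall t : R, f (t *: v + a) = g (t *: u + b)) ->
  derivable f a v = derivable g b u /\ derive f a v = derive g b u.
Proof.
move=> fg.
have fa_gb : f a = g b by have := fg 0; rewrite !scale0r !add0r.
rewrite /derivable /derive.
suff -> : (fun h : R => h^-1 *: ((f \o shift a) (h *: v) - f a)) =
          (fun h : R => h^-1 *: ((g \o shift b) (h *: u) - g b)) by [].
by apply/funext => h /=; rewrite fa_gb fg.
Qed.

Lemma MVT_between (phi : R -> R) (a b : R) : (forall s, derivable phi s 1) ->
  exists2 xi, `|xi - a| <= `|b - a| & phi b - phi a = derive phi xi 1 * (b - a).
Proof.
move=> dphi.
have phi_cont c e : {within `[c, e], continuous phi}.
  by apply: derivable_within_continuous => s _; exact: dphi.
have phi' s : is_derive s (1 : R) phi (derive phi s 1) by exact: derivableP.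
have [ab|ba] := leP a b.
  have [xi] := MVT_segment ab (fun s _ => phi' s) (phi_cont a b).
  rewrite in_itv /= => /andP[axi xib] E; exists xi => //.
  by rewrite ger0_norm ?subr_ge0 // ger0_norm ?subr_ge0 //; lra.
have [xi] := MVT_segment (ltW ba) (fun s _ => phi' s) (phi_cont b a).
rewrite in_itv /= => /andP[bxi xia] E; exists xi.
  by rewrite ler0_norm ?subr_le0 // ler0_norm ?subr_le0 ?(ltW ba) //; lra.
by rewrite -opprB E -mulrN opprB.
Qed.

(* Mean value theorem on the segment from [t *: w + x] in direction [e]; the
   drift [t *: w] of the base point is absorbed by continuity of the partial
   derivative at [x]. *)
Lemma cvg_shifted_quotient (V : normedModType R) (h : V -> R) (e w x : V)
    (c : R) :
  (forall y, derivable h y e) -> {for x, continuous (fun y => derive h y e)} ->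
  (fun t : R => t^-1 * (h (t *: (c *: e) + (t *: w + x)) - h (t *: w + x)))
    @ 0^' --> c * derive h x e.
Proof.
move=> dh ch; apply/cvgrPdist_le => eps eps0.
have eps1 : 0 < eps / (`|c| + 1) by rewrite divr_gt0 // ltr_pwDr.
move/cvgrPdist_le : ch => /(_ _ eps1) /nbhs_ballP [r /= r0 near_x].
have K0 : 0 < `|c| * `|e| + `|w| + 1 by rewrite ltr_pwDr // addr_ge0 // mulr_ge0.
near=> t.
have t_neq0 : t != 0 by near: t; exact: nbhs_dnbhs_neq.
have t_small : `|t| < r / (`|c| * `|e| + `|w| + 1).
  by near: t; apply: dnbhs0_lt; exact: divr_gt0.
set z := t *: w + x.
pose phi s := h (s *: e + z).
have dphi s : derivable phi s 1 /\ derive phi s 1 = derive h (s *: e + z) e.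
  have [-> ->] : derivable phi s 1 = derivable h (s *: e + z) e /\
      derive phi s 1 = derive h (s *: e + z) e.
    apply: eq_line_derive => tau; rewrite /phi scalerDl -addrA.
    by congr (h (_ *: e + _)); exact: mulr1.
  by split; first exact: dh.
have [xi xi_t E] := MVT_between 0 (t * c) (fun s => (dphi s).1).
rewrite !subr0 in xi_t E; rewrite (dphi xi).2 /phi scale0r add0r in E.
rewrite scalerA E.
have -> : t^-1 * (derive h (xi *: e + z) e * (t * c)) =
          c * derive h (xi *: e + z) e by field.
rewrite -mulrBr normrM.
have near_partial : `|derive h x e - derive h (xi *: e + z) e| <= eps / (`|c| + 1).
  apply: near_x; rewrite -ball_normE /= /z.
  have -> : x - (xi *: e + (t *: w + x)) = - (xi *: e + t *: w).
    by rewrite addrA opprD addrCA subrr addr0.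
  rewrite normrN (le_lt_trans (ler_normD _ _)) // !normrZ.
  have xi_le : `|xi| <= `|t| * `|c| by rewrite -normrM.
  apply: (@le_lt_trans _ _ (`|t| * (`|c| * `|e| + `|w| + 1))).
    by have := normr_ge0 e; have := normr_ge0 w; have := normr_ge0 t; nra.
  by rewrite -ltr_pdivlMr.
apply: (le_trans (ler_wpM2l (normr_ge0 c) near_partial)).
by rewrite mulrA ler_pdivrMr ?ltr_pwDr //; nra.
Unshelve. all: by end_near.
Qed.

Section ContinuousPartials.
Variables (m n : nat) (h : 'M[R]_(m, n) -> R).
Hypothesis h_partial : forall (p : 'I_m * 'I_n) y, derivable h y (delta_mx p.1 p.2).
Hypothesis h_partial_cont :
  forall p : 'I_m * 'I_n, continuous (fun y => derive h y (delta_mx p.1 p.2)).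

Lemma cvg_quotient_partials (s : seq ('I_m * 'I_n)) (x v : 'M[R]_(m, n)) :
  uniq s -> (forall p, p \notin s -> v p.1 p.2 = 0) ->
  (fun t : R => t^-1 * (h (t *: v + x) - h x)) @ 0^' -->
    \sum_(p <- s) v p.1 p.2 * derive h x (delta_mx p.1 p.2).
Proof.
elim: s v => [|p s IH] v /=.
  move=> _ v0; have -> : v = 0 by apply/matrixP => i j; rewrite mxE (v0 (i, j)).
  rewrite big_nil; apply: cvg_near_cst; apply: nearW => t.
  by rewrite scaler0 add0r subrr mulr0.
move=> /andP[p_s s_uniq] v_supp.
set w := v - v p.1 p.2 *: delta_mx p.1 p.2.
have wE q : q != p -> w q.1 q.2 = v q.1 q.2.
  rewrite /w !mxE; case: q p {p_s v_supp w} => [q1 q2] [p1 p2] /=.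
  by rewrite xpair_eqE => /negPf ->; rewrite mulr0 subr0.
have w_supp q : q \notin s -> w q.1 q.2 = 0.
  move=> q_s; have [->|qp] := eqVneq q p; first by rewrite /w !mxE !eqxx mulr1 subrr.
  by rewrite wE // v_supp // inE negb_or qp.
have -> : (fun t : R => t^-1 * (h (t *: v + x) - h x)) =
  (fun t => t^-1 * (h (t *: (v p.1 p.2 *: delta_mx p.1 p.2) + (t *: w + x))
      - h (t *: w + x)) + t^-1 * (h (t *: w + x) - h x)).
  apply/funext => t /=; rewrite -mulrDr addrA subrK; congr (_ * (h _ - _)).
  by rewrite addrA -scalerDr [_ + w]addrC /w subrK.
rewrite big_cons.
have -> : \sum_(q <- s) v q.1 q.2 * derive h x (delta_mx q.1 q.2) =
          \sum_(q <- s) w q.1 q.2 * derive h x (delta_mx q.1 q.2).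
  by apply: eq_big_seq => q q_s; rewrite wE //; apply: contraNneq p_s => <-.
apply: cvgD; last exact: IH.
exact: (cvg_shifted_quotient w (@h_partial p) (@h_partial_cont p x) (c := v p.1 p.2)).
Qed.

Lemma derive_partials (x v : 'M[R]_(m, n)) :
  derivable h x v /\
  derive h x v = \sum_(p : 'I_m * 'I_n) v p.1 p.2 * derive h x (delta_mx p.1 p.2).
Proof.
have quotient_cvg := cvg_quotient_partials (x := x) (v := v) (index_enum_uniq _)
  (fun p => ltac:(by rewrite mem_index_enum)).
by split; [exact: cvgP quotient_cvg | exact: cvg_lim quotient_cvg].
Qed.

End ContinuousPartials.
End DirectionalDerivatives.

Section PolynomialGrowth.
Variable R : realType.

Definition poly_bounded (V : normedModType R) (g : V -> R) : Prop :=
  exists (C : R) (N : nat), forall x, `|g x| <= C * (1 + `|x| ^+ N).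

Lemma exprn_le1D (a : R) (i N : nat) : 0 <= a -> (i <= N)%N -> a ^+ i <= 1 + a ^+ N.
Proof.
move=> a0 iN; have [a1|a1] := leP a 1.
  by rewrite (le_trans (exprn_ile1 i a0 a1)) // lerDl exprn_ge0.
by rewrite (le_trans _ (ler_wpDl ler01 (lexx _))) // ler_eXn2l.
Qed.

Variable V : normedModType R.

Lemma poly_bounded0 : poly_bounded (fun _ : V => 0).
Proof. by exists 0, 0%N => x; rewrite normr0 mul0r. Qed.

Lemma poly_boundedZ (c : R) (g : V -> R) : poly_bounded g ->
  poly_bounded (fun x => c * g x).
Proof.
move=> [C [N g_le]]; exists (`|c| * C), N => x.
by rewrite normrM -mulrA ler_wpM2l.
Qed.

Lemma poly_boundedD (g1 g2 : V -> R) : poly_bounded g1 -> poly_bounded g2 ->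
  poly_bounded (fun x => g1 x + g2 x).
Proof.
move=> [C1 [N1 g1_le]] [C2 [N2 g2_le]].
exists (2 * (`|C1| + `|C2|)), (maxn N1 N2) => x.
have gi_le (C : R) N (g : V -> R) : (forall x, `|g x| <= C * (1 + `|x| ^+ N)) ->
    `|g x| <= `|C| * (1 + `|x| ^+ N).
  move=> g_le; apply: le_trans (g_le x) _; apply: ler_wpM2r; last exact: ler_norm.
  by rewrite addr_ge0 // exprn_ge0.
have := exprn_le1D (normr_ge0 x) (leq_maxl N1 N2).
have := exprn_le1D (normr_ge0 x) (leq_maxr N1 N2).
have := gi_le _ _ _ g1_le; have := gi_le _ _ _ g2_le.
have := exprn_ge0 (maxn N1 N2) (normr_ge0 x).
have := normr_ge0 C1; have := normr_ge0 C2.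
move: (ler_normD (g1 x) (g2 x)).
set A := `|x| ^+ maxn N1 N2; set A1 := `|x| ^+ N1; set A2 := `|x| ^+ N2.
nra.
Qed.

Lemma poly_bounded_comp (W : normedModType R) (g : W -> R) (L : V -> W) (K : R) :
  0 <= K -> (forall x, `|L x| <= K * `|x|) -> poly_bounded g ->
  poly_bounded (fun x => g (L x)).
Proof.
move=> K0 L_le [C [N g_le]]; exists (`|C| * (1 + K ^+ N)), N => x.
apply: (le_trans (g_le _)).
apply: (@le_trans _ _ (`|C| * (1 + `|L x| ^+ N))).
  by apply: ler_wpM2r; [rewrite addr_ge0 // exprn_ge0 | exact: ler_norm].
rewrite -mulrA ler_wpM2l //.
have : `|L x| ^+ N <= (K * `|x|) ^+ N by rewrite lerXn2r ?nnegrE // mulr_ge0.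
have := exprn_ge0 N K0; have := exprn_ge0 N (normr_ge0 x).
by rewrite exprMn; nra.
Qed.

End PolynomialGrowth.

Lemma normr_mx_entry_le (R : realType) (m n : nat) (x : 'M[R]_(m, n)) i j :
  `|x i j| <= `|x|.
Proof.
by rewrite [leRHS]/Num.norm /= mx_normrE; apply/bigmax_geP; right; exists (i, j).
Qed.

Section LinearChangeOfVariables.
Variables (R : realType) (m n m' n' : nat) (L : 'M[R]_(m', n') -> 'M[R]_(m, n)).
Hypothesis L_linear : linear L.
HB.instance Definition _ := GRing.isLinear.Build R _ _ _ L L_linear.

Lemma linear_mx_le : exists2 K, 0 <= K & forall x, `|L x| <= K * `|x|.
Proof.
exists (\sum_(q : 'I_m' * 'I_n') `|L (delta_mx q.1 q.2)|) => [|x].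
  by rewrite sumr_ge0.
rewrite {1}(matrix_sum_delta x) pair_big /= linear_sum mulr_suml.
rewrite (le_trans (ler_norm_sum _ _ _)) // ler_sum // => q _.
by rewrite linearZ normrZ mulrC ler_wpM2l // normr_mx_entry_le.
Qed.

Lemma linear_mx_continuous : continuous L.
Proof.
have [K K0 L_le] := linear_mx_le.
apply: bounded_linear_continuous; rewrite /bounded_near; near=> M.
apply: filterS (nbhs0_le ltr01) => x /= x_le1.
apply: le_trans (L_le x) _; apply: (@le_trans _ _ K).
  by rewrite -[leRHS]mulr1 ler_wpM2l.
by near: M; apply: nbhs_pinfty_ge; rewrite realE K0.
Unshelve. all: by end_near.
Qed.

Variable f : 'M[R]_(m, n) -> R.
Hypothesis f_Cinf : Cinf_p f.

Definition partials_comb (t : seq (R * seq ('I_m * 'I_n))) (x : 'M[R]_(m', n')) : R :=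
  \sum_(a <- t) a.1 * iter_partial a.2 f (L x).

Lemma partials_comb_nil : partials_comb [::] = cst 0.
Proof. by apply/funext => x; rewrite /partials_comb big_nil. Qed.

Lemma partials_comb_cons a t : partials_comb (a :: t) =
  (fun x => a.1 * iter_partial a.2 f (L x)) + partials_comb t.
Proof. by apply/funext => x; rewrite /partials_comb big_cons. Qed.

Lemma derive_iter_partial l (x v : 'M[R]_(m, n)) :
  derivable (iter_partial l f) x v /\
  derive (iter_partial l f) x v =
    \sum_(q : 'I_m * 'I_n) v q.1 q.2 * iter_partial (q :: l) f x.
Proof.
apply: derive_partials => [p y|p]; first exact: (f_Cinf l).2.1.
exact: (f_Cinf (p :: l)).1.
Qed.

Lemma derive_comp_linear l (x v : 'M[R]_(m', n')) :
  derivable (fun y => iter_partial l f (L y)) x v /\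
  derive (fun y => iter_partial l f (L y)) x v =
    \sum_(q : 'I_m * 'I_n) L v q.1 q.2 * iter_partial (q :: l) f (L x).
Proof.
have [-> ->] : derivable (fun y => iter_partial l f (L y)) x v =
    derivable (iter_partial l f) (L x) (L v) /\
    derive (fun y => iter_partial l f (L y)) x v = derive (iter_partial l f) (L x) (L v).
  by apply: eq_line_derive => tau; rewrite linearP.
exact: derive_iter_partial.
Qed.

Lemma partial_partials_comb t (p : 'I_m' * 'I_n') :
  exists t', (forall x, derivable (partials_comb t) x (delta_mx p.1 p.2)) /\
    (fun x => derive (partials_comb t) x (delta_mx p.1 p.2)) = partials_comb t'.
Proof.
set e := delta_mx p.1 p.2 : 'M[R]_(m', n').
elim: t => [|a t [t' [IHd IHe]]].
  exists [::]; rewrite partials_comb_nil; split => [x|]; first exact: derivable_cst.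
  by apply/funext => x; rewrite derive_cst.
have da x := (derive_comp_linear a.2 x e).1.
have da_scaled x : derivable (fun y => a.1 * iter_partial a.2 f (L y)) x e.
  exact: derivableZ (da x).
exists ([seq (a.1 * L e q.1 q.2, q :: a.2) | q <- index_enum ('I_m * 'I_n)%type] ++ t').
rewrite partials_comb_cons; split => [x|]; first exact: derivableD.
apply/funext => x; rewrite deriveD // deriveZ // (derive_comp_linear a.2 x e).2.
have -> : derive (partials_comb t) x e = partials_comb t' x by rewrite -IHe.
rewrite /partials_comb big_cat big_map /= scaler_sumr; congr (_ + _).
by apply: eq_bigr => q _; rewrite scalerAl.
Qed.

Lemma partials_comb_continuous t : continuous (partials_comb t).
Proof.
elim: t => [|a t IH]; first by rewrite partials_comb_nil; exact: cst_continuous.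
rewrite partials_comb_cons => x; apply: continuousD; last exact: IH.
apply: (@continuousM _ _ (cst a.1) (iter_partial a.2 f \o L)).
  exact: cst_continuous.
by apply: continuous_comp; [exact: linear_mx_continuous | exact: (f_Cinf a.2).1].
Qed.

Lemma partials_comb_poly_bounded t : poly_bounded (partials_comb t).
Proof.
have [K K0 L_le] := linear_mx_le.
elim: t => [|a t IH]; first by rewrite partials_comb_nil; exact: poly_bounded0.
rewrite partials_comb_cons; apply: poly_boundedD => //; apply: poly_boundedZ.
exact: poly_bounded_comp K0 L_le (f_Cinf a.2).2.2.
Qed.

Lemma iter_partial_comp_linear l :
  exists t, iter_partial l (f \o L) = partials_comb t.
Proof.
elim: l => [|p l [t IH]].
  exists [:: (1, [::])]; apply/funext => x.
  by rewrite /partials_comb big_cons big_nil /= mul1r addr0.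
have [t' [_ E]] := partial_partials_comb t p.
by exists t'; rewrite /= IH.
Qed.

Lemma Cinf_p_comp_linear : Cinf_p (f \o L).
Proof.
move=> l; have [t ->] := iter_partial_comp_linear l.
split; first exact: partials_comb_continuous.
split; last exact: partials_comb_poly_bounded.
by move=> p x; have [t' [dt _]] := partial_partials_comb t p.
Qed.

End LinearChangeOfVariables.

Section DyadicPoints.
Variable R : realType.

Lemma pow2R_gt0 (n : nat) : 0 < (2 ^ n)%:R :> R.
Proof. by rewrite ltr0n expn_gt0. Qed.

Lemma dyadic_le (a b k : nat) :
  (a%:R / (2 ^ k)%:R <= b%:R / (2 ^ k)%:R :> R) = (a <= b)%N.
Proof. by rewrite ler_pM2r ?ler_nat // invr_gt0 pow2R_gt0. Qed.

Lemma dyadic_lt (a b k : nat) :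
  (a%:R / (2 ^ k)%:R < b%:R / (2 ^ k)%:R :> R) = (a < b)%N.
Proof. by rewrite ltr_pM2r ?ltr_nat // invr_gt0 pow2R_gt0. Qed.

Lemma dyadic_scale (a k e : nat) :
  a%:R / (2 ^ k)%:R = (a * 2 ^ e)%:R / (2 ^ (k + e))%:R :> R.
Proof.
have := pow2R_gt0 k; have := pow2R_gt0 e.
by rewrite expnD !natrM => e_gt0 k_gt0; field; rewrite !gt_eqF.
Qed.

Lemma dyadic_double (a n : nat) :
  (2 * a)%:R / (2 ^ n.+1)%:R = a%:R / (2 ^ n)%:R :> R.
Proof. by rewrite [RHS](dyadic_scale a n 1) addn1 mulnC. Qed.

(* Between the left tags [l / 2^N] and [(2l+1) / 2^(N+1)] of consecutive
   levels there is no dyadic point of level [m+1 <= N]. *)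
Lemma dyadic_refine_cmp (p l m N : nat) : (m < N)%N ->
  ((p%:R / (2 ^ m.+1)%:R <= l%:R / (2 ^ N)%:R :> R) =
     (p%:R / (2 ^ m.+1)%:R <= (2 * l + 1)%:R / (2 ^ N.+1)%:R :> R)) /\
  ((l%:R / (2 ^ N)%:R < p%:R / (2 ^ m.+1)%:R :> R) =
     ((2 * l + 1)%:R / (2 ^ N.+1)%:R < p%:R / (2 ^ m.+1)%:R :> R)).
Proof.
move=> mN; have [e ->] : exists e, N = (m.+1 + e)%N by exists (N - m.+1)%N; lia.
rewrite {1 3}(dyadic_scale p m.+1 e) (dyadic_scale p m.+1 e.+1) -addnS.
by rewrite !dyadic_le !dyadic_lt expnS; split; apply/idP/idP; lia.
Qed.

End DyadicPoints.

Section DyadicRefinement.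
Variable R : realType.

Lemma haar_level_bounds (r : nat) : (1 < r)%N ->
  (2 ^ trunc_log 2 r.-1 < r <= 2 ^ (trunc_log 2 r.-1).+1)%N.
Proof.
move=> r_gt1; have := @trunc_log_bounds 2 r.-1 isT.
by rewrite (_ : 0 < r.-1 = true)%N; [move=> /(_ isT) /andP[]; lia | lia].
Qed.

Lemma H_refine (r N l : nat) : (0 < r <= 2 ^ N)%N ->
  H r ((2 * l + 1)%:R / (2 ^ N.+1)%:R) = H r (l%:R / (2 ^ N)%:R) :> R.
Proof.
rewrite /H; case: eqP => // /eqP r_neq1 /andP[r_gt0 r_le].
have r_gt1 : (1 < r)%N by lia.
have /andP[r_gt r_le'] := haar_level_bounds r_gt1.
set m := trunc_log 2 r.-1 in r_gt r_le' *.
have mN : (m < N)%N by rewrite -(@ltn_exp2l 2) //; lia.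
rewrite /haar; set k := (r - 2 ^ m)%N.
have [le1 _] := dyadic_refine_cmp R (2 * k - 2) l mN.
have [le2 lt2] := dyadic_refine_cmp R (2 * k - 1) l mN.
have [_ lt3] := dyadic_refine_cmp R (2 * k) l mN.
by rewrite le1 le2 lt2 lt3.
Qed.

Lemma gfun_refine (d i N l : nat) : ((i.-1 %/ d).+1 <= 2 ^ N)%N ->
  gfun d i ((2 * l + 1)%:R / (2 ^ N.+1)%:R) = gfun d i (l%:R / (2 ^ N)%:R) :> 'rV[R]_d.
Proof.
by move=> iN; apply/rowP => j; rewrite !mxE; case: eqP => // _; rewrite H_refine.
Qed.

Lemma sum_pow2S_pairs (F : nat -> R) (n : nat) :
  \sum_(l < 2 ^ n.+1) F l = \sum_(t < 2 ^ n) (F (2 * t)%N + F (2 * t + 1)%N).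
Proof.
rewrite expnS; elim: (2 ^ n)%N => [|m IH]; first by rewrite muln0 !big_ord0.
rewrite (_ : 2 * m.+1 = (2 * m).+2)%N; last lia.
by rewrite !big_ord_recr /= IH -addrA addn1.
Qed.

Lemma RS_sumS (d : nat) (g gamma : R -> 'rV[R]_d) (n : nat) :
  (forall l, (l < 2 ^ n)%N ->
     g ((2 * l + 1)%:R / (2 ^ n.+1)%:R) = g (l%:R / (2 ^ n)%:R)) ->
  RS_sum g gamma n.+1 = RS_sum g gamma n.
Proof.
move=> g_refine; rewrite /RS_sum (sum_pow2S_pairs (fun l => \sum_(j < d)
  g (l%:R / (2 ^ n.+1)%:R) 0 j *
  (gamma (l.+1%:R / (2 ^ n.+1)%:R) 0 j - gamma (l%:R / (2 ^ n.+1)%:R) 0 j))).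
apply: eq_bigr => t _.
rewrite -big_split /=; apply: eq_bigr => j _.
rewrite g_refine // (_ : (2 * t + 1).+1 = 2 * t.+1)%N; last lia.
by rewrite !dyadic_double addn1; ring.
Qed.

Lemma pairS_RS_sum (d i N : nat) (gamma : R -> 'rV[R]_d) :
  ((i.-1 %/ d).+1 <= 2 ^ N)%N -> pairS d i gamma = RS_sum (gfun d i) gamma N.
Proof.
move=> iN.
have RS_const p : RS_sum (gfun d i) gamma (N + p) = RS_sum (gfun d i) gamma N.
  elim: p => [|p IH]; first by rewrite addn0.
  rewrite addnS RS_sumS // => l _; apply: gfun_refine; apply: (leq_trans iN).
  by rewrite leq_pexp2l //; lia.
have RS_cvg : RS_sum (gfun d i) gamma @ \oo --> RS_sum (gfun d i) gamma N.
  apply: cvg_near_cst; near=> k.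
  have Nk : (N <= k)%N by near: k; exact: nbhs_infty_ge.
  by rewrite -(subnKC Nk) RS_const.
exact: cvg_lim RS_cvg.
Unshelve. all: by end_near.
Qed.

Lemma sum_ord_dirac (n : nat) (k : 'I_n) (F : 'I_n -> R) :
  \sum_(r < n) (r == k)%:R * F r = F k.
Proof.
by rewrite (bigD1 k) //= eqxx mul1r big1 ?addr0 // => r /negbTE ->; rewrite mul0r.
Qed.

Lemma pairS_coord (d i N : nat) (j : 'I_d) (gamma : R -> 'rV[R]_d) :
  (i.-1 %% d)%N = j -> ((i.-1 %/ d).+1 <= 2 ^ N)%N ->
  pairS d i gamma = \sum_(t < 2 ^ N) H (i.-1 %/ d).+1 (t%:R / (2 ^ N)%:R) *
    (gamma (t.+1%:R / (2 ^ N)%:R) 0 j - gamma (t%:R / (2 ^ N)%:R) 0 j).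
Proof.
move=> ij iN; rewrite (pairS_RS_sum _ iN) /RS_sum; apply: eq_bigr => t _.
rewrite -(sum_ord_dirac j (fun j' => H (i.-1 %/ d).+1 (t%:R / (2 ^ N)%:R) *
  (gamma (t.+1%:R / (2 ^ N)%:R) 0 j' - gamma (t%:R / (2 ^ N)%:R) 0 j'))).
apply: eq_bigr => j' _; rewrite mxE ij -[(j' : nat) == j]/(j' == j).
by case: eqP => _; rewrite ?mul1r ?mul0r.
Qed.

End DyadicRefinement.

Section HaarSpan.
Variable R : realType.

Lemma sum_pow2S_halves (F : nat -> R) (N : nat) :
  \sum_(r < 2 ^ N.+1) F r = \sum_(r < 2 ^ N) F r + \sum_(r < 2 ^ N) F (2 ^ N + r)%N.
Proof. by rewrite expnS mul2n -addnn big_split_ord. Qed.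

Lemma H_pow2D (N l : nat) (u : R) : (l < 2 ^ N)%N ->
  H (2 ^ N + l).+1 u = haar N l.+1 u.
Proof.
move=> lN; rewrite /H (_ : (2 ^ N + l).+1 == 1 = false)%N; last first.
  by rewrite eqSS addn_eq0 expn_eq0.
rewrite (_ : trunc_log 2 (2 ^ N + l).+1.-1 = N).
  by rewrite (_ : (2 ^ N + l).+1 - 2 ^ N = l.+1)%N //; lia.
by apply: trunc_log_eq => //; rewrite expnS; apply/andP; split; lia.
Qed.

(* The new Haar function of level [N] splits the average of two neighbouring
   steps of level [N] into the step of level [N+1] in between. *)
Lemma haar_step_odd (N l : nat) (u : R) :
  ((u < l%:R / (2 ^ N)%:R)%R%:R + (u < l.+1%:R / (2 ^ N)%:R)%R%:R) / 2
    + (2 * Num.sqrt (2 ^ N)%:R)^-1 * haar N l.+1 u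
  = (u < (2 * l + 1)%:R / (2 ^ N.+1)%:R)%R%:R.
Proof.
rewrite /haar /= (_ : 2 * l.+1 - 2 = 2 * l)%N; last lia.
rewrite (_ : 2 * l.+1 - 1 = 2 * l + 1)%N; last lia.
rewrite -(dyadic_double R l N) -(dyadic_double R l.+1 N).
set a := _ / (2 ^ N.+1)%:R; set b := (2 * l + 1)%:R / _; set c := (2 * l.+1)%:R / _.
have ab : a < b by rewrite dyadic_lt; lia.
have bc : b < c by rewrite dyadic_lt; lia.
have s_gt0 : 0 < Num.sqrt (2 ^ N)%:R :> R by rewrite sqrtr_gt0 pow2R_gt0.
set s := Num.sqrt _ in s_gt0 *.
have s_half : (2 * s)^-1 * s = 1 / 2 by field; rewrite gt_eqF.
have [ua|au] := ltrP u a; have [ub|bu] := ltrP u b; have [uc|cu] := ltrP u c;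
  rewrite /= ?mulrN ?s_half ?mulr0; lra.
Qed.

Lemma dyadic_step_haar_span (N l : nat) : (l <= 2 ^ N)%N ->
  exists c : nat -> R, forall u : R, 0 <= u -> u < 1 ->
    \sum_(r < 2 ^ N) c r * H r.+1 u = (u < l%:R / (2 ^ N)%:R)%R%:R.
Proof.
elim: N l => [|N IH] l lN.
  exists (fun=> l%:R) => u u0 u1; rewrite big_ord1 /H /= mulr1 divr1.
  by case: l lN => [|[|//]] _; rewrite ?u1 // ltNge u0.
have l_split := odd_double_half l; set l' := l./2 in l_split.
case: (boolP (odd l)) => [l_odd|l_even]; last first.
  have l_eq : l = (2 * l')%N by move: l_split; rewrite (negbTE l_even); lia.
  have l'_le : (l' <= 2 ^ N)%N by move: lN; rewrite expnS l_eq; lia.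
  have [c c_step] := IH l' l'_le.
  exists (fun r => if (r < 2 ^ N)%N then c r else 0) => u u0 u1.
  rewrite (sum_pow2S_halves (fun r => (if (r < 2 ^ N)%N then c r else 0) * H r.+1 u)).
  rewrite [X in _ + X]big1 => [|r _]; last by rewrite ltnNge leq_addr mul0r.
  rewrite addr0 l_eq dyadic_double -c_step //.
  by apply: eq_bigr => r _; rewrite ltn_ord.
have l_eq : l = (2 * l' + 1)%N by move: l_split; rewrite l_odd; lia.
have l'_lt : (l' < 2 ^ N)%N by move: lN; rewrite expnS; lia.
have [c1 c1_step] := IH l' (ltnW l'_lt).
have [c2 c2_step] := IH l'.+1 l'_lt.
set s := Num.sqrt (2 ^ N)%:R : R.
pose c r := if (r < 2 ^ N)%N then (c1 r + c2 r) / 2 else (r == 2 ^ N + l')%N%:R / (2 * s).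
exists c => u u0 u1; rewrite (sum_pow2S_halves (fun r => c r * H r.+1 u)).
have -> : \sum_(r < 2 ^ N) c r * H r.+1 u =
    ((u < l'%:R / (2 ^ N)%:R)%R%:R + (u < l'.+1%:R / (2 ^ N)%:R)%R%:R) / 2.
  rewrite -c1_step // -c2_step // mulrDl !mulr_suml -big_split.
  by apply: eq_bigr => r _; rewrite /c ltn_ord !mulrDl !(mulrAC _ 2^-1).
have -> : \sum_(r < 2 ^ N) c (2 ^ N + r)%N * H (2 ^ N + r).+1 u =
    (2 * s)^-1 * haar N l'.+1 u.
  rewrite -(H_pow2D _ l'_lt) -(sum_ord_dirac (Ordinal l'_lt)
    (fun r => (2 * s)^-1 * H (2 ^ N + r).+1 u)).
  by apply: eq_bigr => r _; rewrite /c ltnNge leq_addr /= eqn_add2l mulrA.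
by rewrite haar_step_odd l_eq.
Qed.

End HaarSpan.

Section PairingsAndSamples.
Variable R : realType.

Lemma sum_ord_mod (d P : nat) (j : 'I_d) (F : nat -> R) :
  \sum_(q < d * P) ((q %% d)%N == j)%:R * F q = \sum_(r < P) F (r * d + j)%N.
Proof.
elim: P => [|P IH]; first by rewrite muln0 !big_ord0.
rewrite big_ord_recr -IH mulnS addnC big_split_ord /=; congr (_ + _).
rewrite -(sum_ord_dirac j (fun i => F (P * d + i)%N)); apply: eq_bigr => i _.
by rewrite [(d * P)%N]mulnC modnMDl modn_small.
Qed.

Lemma telescope_prefix (u : nat -> R) (M l : nat) : (l <= M)%N ->
  \sum_(t < M) (t < l)%N%:R * (u t.+1 - u t) = u l - u 0%N.
Proof.
move=> lM; rewrite -telescope_sumr // big_mkord.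
rewrite (big_ord_widen M (fun t => u t.+1 - u t) lM) [RHS]big_mkcond.
by apply: eq_bigr => t _; case: ifP; rewrite ?mul1r ?mul0r.
Qed.

Lemma pairS_combination (d N l : nat) (c : nat -> R) (gamma : R -> 'rV[R]_d)
    (j : 'I_d) :
  gamma 0 = 0 -> (l <= 2 ^ N)%N ->
  (forall u : R, 0 <= u -> u < 1 ->
     \sum_(r < 2 ^ N) c r * H r.+1 u = (u < l%:R / (2 ^ N)%:R)%R%:R) ->
  \sum_(q < d * 2 ^ N) ((q %% d)%N == j)%:R * (c (q %/ d)%N * pairS d q.+1 gamma) =
    gamma (l%:R / (2 ^ N)%:R) 0 j.
Proof.
move=> gamma0 lN c_step; have d_gt0 : (0 < d)%N by apply: leq_ltn_trans (ltn_ord j).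
pose sample t := gamma (t%:R / (2 ^ N)%:R) 0 j.
transitivity (\sum_(r < 2 ^ N) \sum_(t < 2 ^ N)
    c r * H r.+1 (t%:R / (2 ^ N)%:R) * (sample t.+1 - sample t)).
  rewrite (sum_ord_mod _ j (fun q => c (q %/ d)%N * pairS d q.+1 gamma)).
  apply: eq_bigr => r _.
  have rj_div : ((r * d + j) %/ d = r)%N by rewrite divnMDl // divn_small ?addn0.
  have rj_mod : ((r * d + j) %% d = j)%N by rewrite modnMDl modn_small.
  rewrite (@pairS_coord R d (r * d + j).+1 N j gamma rj_mod) /= rj_div;
    last exact: ltn_ord.
  by rewrite mulr_sumr; apply: eq_bigr => t _; rewrite mulrA.
have -> : gamma (l%:R / (2 ^ N)%:R) 0 j = sample l - sample 0%N.
  by rewrite /sample mul0r gamma0 mxE subr0.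
rewrite exchange_big /= -(telescope_prefix sample lN).
apply: eq_bigr => t _; rewrite -mulr_suml c_step ?dyadic_lt //.
by rewrite ltr_pdivrMr ?pow2R_gt0 // mul1r ltr_nat.
Qed.

Lemma sum_prev_sample (d N : nat) (gamma : R -> 'rV[R]_d) (t : 'I_(2 ^ N)) (j : 'I_d) :
  gamma 0 = 0 ->
  \sum_(t' < 2 ^ N) (t'.+1 == t)%:R * gamma (t'.+1%:R / (2 ^ N)%:R) 0 j =
    gamma (t%:R / (2 ^ N)%:R) 0 j.
Proof.
move=> gamma0; case: t => [[|s] s_lt] /=.
  by rewrite mul0r gamma0 mxE big1 // => t' _; rewrite mul0r.
exact: (sum_ord_dirac (Ordinal (ltnW s_lt))
  (fun t' => gamma (t'.+1%:R / (2 ^ N)%:R) 0 j)).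
Qed.

End PairingsAndSamples.

Lemma inY_inYt (R : realType) (d : nat) (F : (R -> 'rV[R]_d) -> R) :
  (0 < d)%N -> inY F -> inYt F.
Proof.
move=> d_gt0 [k [n [l [f [k_gt0 [_ [l_range [_ [_ [f_Cinf F_eq]]]]]]]]]].
have /choice [c c_step] : forall i : 'I_k, exists c : nat -> R,
    forall u : R, 0 <= u -> u < 1 ->
    \sum_(r < 2 ^ n) c r * H r.+1 u = (u < (l i)%:R / (2 ^ n)%:R)%R%:R.
  by move=> i; exact: dyadic_step_haar_span (l_range i (ltn_ord i)).2.
pose L (y : 'rV[R]_(d * 2 ^ n)) : 'M[R]_(k, d) := \matrix_(i, j)
  \sum_(q < d * 2 ^ n) ((q %% d)%N == j)%:R * (c i (q %/ d)%N * y 0 q).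
have L_linear : linear L.
  move=> a x y; apply/matrixP => i j; rewrite !mxE mulr_sumr -big_split.
  by apply: eq_bigr => q _ /=; rewrite !mxE; ring.
exists (d * 2 ^ n)%N, (f \o L); split; first by rewrite muln_gt0 d_gt0 expn_gt0.
  exact: Cinf_p_comp_linear.
move=> gamma gamma_C0; rewrite F_eq //=; congr f; apply/matrixP => i j.
rewrite !mxE -(pairS_combination j gamma_C0.2 (l_range i (ltn_ord i)).2 (c_step i)).
by apply: eq_bigr => q _; rewrite mxE.
Qed.

Lemma inYt_inY (R : realType) (d : nat) (F : (R -> 'rV[R]_d) -> R) :
  inYt F -> inY F.
Proof.
move=> [k [f [k_gt0 f_Cinf F_eq]]].
(* Row [t] of a sample matrix [M] holds gamma((t+1) / 2^k), so that [prev M t]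
   is gamma(t / 2^k), using gamma(0) = 0 for [t = 0]. *)
pose prev (M : 'M[R]_(2 ^ k, d)) (t : 'I_(2 ^ k)) j :=
  \sum_(t' < 2 ^ k) (t'.+1 == t)%:R * M t' j.
pose L (M : 'M[R]_(2 ^ k, d)) : 'rV[R]_k := \row_(i < k) \sum_(t < 2 ^ k)
  \sum_(j < d) gfun d i.+1 (t%:R / (2 ^ k)%:R) 0 j * (M t j - prev M t j).
have prevP a M1 M2 t j : prev (a *: M1 + M2) t j = a * prev M1 t j + prev M2 t j.
  by rewrite /prev mulr_sumr -big_split; apply: eq_bigr => t' _ /=; rewrite !mxE; ring.
have L_linear : linear L.
  move=> a x y; apply/rowP => i; rewrite !mxE mulr_sumr -big_split.
  apply: eq_bigr => t _; rewrite mulr_sumr -big_split.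
  by apply: eq_bigr => j _ /=; rewrite prevP !mxE; ring.
exists (2 ^ k)%N, k, succn, (f \o L).
split; first by rewrite expn_gt0.
split; first by [].
split; first by move=> i ik.
split; first by [].
split; first by rewrite prednK ?expn_gt0.
split; first exact: Cinf_p_comp_linear.
move=> gamma gamma_C0; rewrite F_eq //=; congr f; apply/rowP => i; rewrite !mxE.
have i_le : ((i.+1.-1 %/ d).+1 <= 2 ^ k)%N.
  apply: leq_trans (leq_ltn_trans (leq_div i d) (ltn_ord i)) _.
  exact: ltnW (ltn_expl k (ltnSn 1)).
rewrite (pairS_RS_sum _ i_le) /RS_sum; apply: eq_bigr => t _; apply: eq_bigr => j _.
rewrite !mxE /prev -(sum_prev_sample t j gamma_C0.2).
by congr (_ * (_ - _)); apply: eq_bigr => t' _; rewrite mxE.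
Qed.

Theorem lemma1p1 (R : realType) (d : nat) (hd : (0 < d)%N)
    (F : (R -> 'rV[R]_d) -> R) :
  inY F <-> inYt F.
Proof. by split; [exact: inY_inYt | exact: inYt_inY]. Qed.
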